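(* Let $R$ be a ring, $N$ an exact complex of left $R$-modules and $M$ a bounded below complex of left $R$-modules. If $Z_n(N)\in\underline{\mathfrak{Pr}}^{-1}_{R\text{-Mod}}(M_n)$ for every $n\in\mathbb{Z}$, then $N\in\underline{\mathfrak{Pr}}^{-1}_{\mathscr{C}(R)}(M)$.
   Context: Complexes are homologically indexed, $Z_n(N)=\mathrm{Ker}\,d_n^N$. A complex $M$ is bounded below if there is $b$ with $M_n=0$ for all $n\le b$. For objects $M,N$ of an abelian category $\mathscr{A}$ with enough projectives ($R\text{-Mod}$ or the category $\mathscr{C}(R)$ of complexes), $M$ is $N$-subprojective if every morphism $M\to N$ factors through a projective object of $\mathscr{A}$; $\underline{\mathfrak{Pr}}^{-1}_{\mathscr{A}}(M)$ is the class of all $N$ such that $M$ is $N$-subprojective. *)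

From HB Require Import structures.
From mathcomp Require Import all_boot all_order all_algebra.
Set Implicit Arguments. Unset Strict Implicit. Unset Printing Implicit Defensive.
Import GRing.Theory Num.Theory.
Local Open Scope ring_scope.

Section Defs.
Variable R : pzRingType.

Definition is_lin (M N : lmodType R) (f : M -> N) : Prop :=
  forall (a : R) (x y : M), f (a *: x + y) = a *: f x + f y.

Definition projective_mod (P : lmodType R) : Prop :=
  forall (X Y : lmodType R) (p : X -> Y) (f : P -> Y),
    is_lin p -> (forall y, exists x, p x = y) -> is_lin f ->
    exists g : P -> X, is_lin g /\ forall z, p (g z) = f z.

Definition subprojective_mod (M N : lmodType R) : Prop :=
  forall f : M -> N, is_lin f ->
    exists (P : lmodType R) (g : M -> P) (h : P -> N),
      [/\ projective_mod P, is_lin g, is_lin h & forall x, f x = h (g x)].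

(* Complexes of left R-modules, homologically indexed by int:
   dif n : obj (n+1) -> obj n  is the differential d_{n+1}. *)
Unset Implicit Arguments.
Record complex := Complex {
  obj : int -> lmodType R;
  dif : forall n : int, obj (n + 1) -> obj n;
  dif_lin : forall n, is_lin (dif n);
  dif_dif : forall n (x : obj (n + 1 + 1)), dif n (dif (n + 1) x) = 0
}.

Set Implicit Arguments.

Definition is_chain (M N : complex) (f : forall n, obj M n -> obj N n) : Prop :=
  (forall n, is_lin (f n)) /\
  (forall n (x : obj M (n + 1)), dif N n (f (n + 1) x) = f n (dif M n x)).

Definition projective_cx (P : complex) : Prop :=
  forall (X Y : complex) (p : forall n, obj X n -> obj Y n)
         (f : forall n, obj P n -> obj Y n),
    is_chain p -> (forall n (y : obj Y n), exists x, p n x = y) -> is_chain f ->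
    exists g : forall n, obj P n -> obj X n,
      is_chain g /\ forall n z, p n (g n z) = f n z.

Definition subprojective_cx (M N : complex) : Prop :=
  forall f : forall n, obj M n -> obj N n, is_chain f ->
    exists (P : complex) (g : forall n, obj M n -> obj P n)
           (h : forall n, obj P n -> obj N n),
      [/\ projective_cx P, is_chain g, is_chain h & forall n x, f n x = h n (g n x)].

Definition exact_cx (N : complex) : Prop :=
  forall n (y : obj N (n + 1)), dif N n y = 0 ->
    exists x : obj N (n + 1 + 1), dif N (n + 1) x = y.

Definition bounded_below (M : complex) : Prop :=
  exists b : int, forall n : int, n <= b -> forall x : obj M n, x = 0.

(* "Z_{n+1}(N) in Pr^{-1}(M_{n+1})", i.e. M_{n+1} is Z_{n+1}(N)-subprojective,
   where Z_{n+1}(N) = Ker (dif N n) <= N_{n+1}. A linear map into the submodule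
   Z_{n+1}(N) is written out as a linear map into N_{n+1} landing in the kernel. *)
Definition cycles_subprojective (M N : complex) (n : int) : Prop :=
  forall f : obj M (n + 1) -> obj N (n + 1),
    is_lin f -> (forall x, dif N n (f x) = 0) ->
    exists (P : lmodType R) (g : obj M (n + 1) -> P) (h : P -> obj N (n + 1)),
      [/\ projective_mod P, is_lin g, is_lin h,
          (forall z, dif N n (h z) = 0) & forall x, f x = h (g x)].

End Defs.

From HB Require Import structures.
From mathcomp Require Import all_boot all_order all_algebra.
From Stdlib Require Import IndefiniteDescription.
Set Implicit Arguments.
Unset Strict Implicit.
Unset Printing Implicit Defensive.
Import Order.TTheory GRing.Theory Num.Theory.
Local Open Scope ring_scope.

(* The chain map f : M -> N is null-homotopic through projectives.  Below
   the bound of M take s_k = 0.  If s_k : M_k -> N_(k+1) factors through a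
   projective and f_k d = d s_k d, then f_(k+1) - s_k d takes values in
   Z_(k+1)(N), so by hypothesis it factors through a projective P as h g with
   h : P -> Z_(k+1)(N); since N is exact, d : N_(k+2) -> Z_(k+1)(N) is onto and
   h lifts to l : P -> N_(k+2).  Then s_(k+1) := l g satisfies
   f_(k+1) = d s_(k+1) + s_k d, and the invariant propagates.  A chain map with
   such a homotopy factors through the direct sum of the disks on the P_k,
   which is a projective complex. *)

Arguments obj {R} c n.
Arguments dif {R} c n x.
Arguments dif_lin {R} c n a x y.
Arguments dif_dif {R} c n x.

Lemma dfun_choice (I : Type) (A : I -> Type) (P : forall i, A i -> Prop) :
  (forall i, exists x, P i x) -> exists f : forall i, A i, forall i, P i (f i).
Proof.
move=> H; exists (fun i => sval (constructive_indefinite_description _ (H i))).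
by move=> i; case: constructive_indefinite_description.
Qed.

Section LinearMaps.
Variable R : pzRingType.
Implicit Types A B C : lmodType R.

Lemma is_lin0 A B (f : A -> B) : is_lin f -> f 0 = 0.
Proof. by move/GRing.semilinear_linear/nmod_morphism_semilinear => []. Qed.

Lemma is_linD A B (f : A -> B) : is_lin f -> {morph f : x y / x + y}.
Proof. by move/GRing.semilinear_linear => []. Qed.

Lemma is_linB A B (f : A -> B) : is_lin f -> {morph f : x y / x - y}.
Proof. exact: GRing.zmod_morphism_linear. Qed.

Lemma is_linZ A B (f : A -> B) : is_lin f -> forall a, {morph f : x / a *: x}.
Proof. by move/GRing.semilinear_linear => []. Qed.

Lemma is_lin_comp A B C (f : B -> C) (g : A -> B) :
  is_lin f -> is_lin g -> is_lin (f \o g).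
Proof. by move=> fL gL a x y /=; rewrite gL fL. Qed.

Lemma is_lin_zero A B : is_lin (fun _ : A => 0 : B).
Proof. by move=> a x y; rewrite scaler0 addr0. Qed.

Lemma pairD A B (x1 y1 : A) (x2 y2 : B) : (x1, x2) + (y1, y2) = (x1 + y1, x2 + y2) :> A * B.
Proof. by []. Qed.

Lemma pairZD A B a (x1 y1 : A) (x2 y2 : B) :
  a *: (x1, x2) + (y1, y2) = (a *: x1 + y1, a *: x2 + y2) :> A * B.
Proof. by []. Qed.

Lemma is_lin_pair A B C (f : A -> B) (g : A -> C) :
  is_lin f -> is_lin g -> is_lin (fun x => (f x, g x) : B * C).
Proof. by move=> fL gL a x y; rewrite fL gL. Qed.

Lemma is_lin_copair A B C (f : A -> C) (g : B -> C) :
  is_lin f -> is_lin g -> is_lin (fun p : A * B => f p.1 + g p.2).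
Proof. by move=> fL gL a [x1 x2] [y1 y2]; rewrite /= fL gL scalerDr addrACA. Qed.

End LinearMaps.
Arguments is_lin_zero {R A B}.

Section Kernel.
Variables (R : pzRingType) (A B : lmodType R) (d : A -> B).
Hypothesis dL : is_lin d.

Definition ker_pred : {pred A} := fun x => d x == 0.

Fact ker_submod_closed : subsemimod_closed ker_pred.
Proof.
split; [split|] => [|x y|a x]; rewrite !unfold_in /ker_pred ?is_lin0 //.
  by rewrite is_linD // => /eqP-> /eqP->; rewrite addr0.
by rewrite is_linZ // => /eqP->; rewrite scaler0.
Qed.

HB.instance Definition _ := GRing.isSubmodClosed.Build R A ker_pred ker_submod_closed.

Definition ker := {x : A | ker_pred x}.
HB.instance Definition _ := [isSub of ker for @sval A ker_pred].
HB.instance Definition _ := [Choice of ker by <:].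
HB.instance Definition _ := [SubChoice_isSubLmodule of ker by <:].

Lemma projective_lift_exact (C P : lmodType R) (e : C -> A) (h : P -> A) :
  is_lin e -> (forall x, d (e x) = 0) -> (forall y, d y = 0 -> exists x, e x = y) ->
  projective_mod P -> is_lin h -> (forall z, d (h z) = 0) ->
  exists l : P -> C, is_lin l /\ forall z, e (l z) = h z.
Proof.
move=> eL de e_onto Pproj hL dh.
pose p x : ker := Sub (e x) (introT eqP (de x)).
pose q z : ker := Sub (h z) (introT eqP (dh z)).
have pL : is_lin p by move=> a x y; apply: val_inj; rewrite linearP !SubK eL.
have qL : is_lin q by move=> a x y; apply: val_inj; rewrite linearP !SubK hL.
have p_onto y : exists x, p x = y.
  by have [x ex] := e_onto (val y) (eqP (valP y)); exists x; apply: val_inj; rewrite SubK.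
have [l [lL el]] := Pproj _ _ p q pL p_onto qL.
by exists l; split => // z; have := congr1 val (el z); rewrite !SubK.
Qed.

End Kernel.

Definition cast (R : pzRingType) (F : int -> lmodType R) i j (e : i = j) : F i -> F j :=
  fun x => ecast k (F k : Type) e x.
Arguments cast {R} F {i j} e.

Section Transport.
Variable R : pzRingType.
Implicit Types F G : int -> lmodType R.

Lemma cast_id F i (e : i = i) x : cast F e x = x.
Proof. by rewrite (eq_irrelevance e erefl). Qed.

Lemma castK F i j (e : i = j) (e' : j = i) x : cast F e' (cast F e x) = x.
Proof. by case: j / e e' => e'; rewrite !cast_id. Qed.

Lemma cast_lin F i j (e : i = j) : is_lin (cast F e).
Proof. by case: j / e. Qed.

Lemma cast_natural F G (u v : int -> int) (phi : forall k, F (u k) -> G (v k))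
    i j (e : i = j) (eu : u i = u j) (ev : v i = v j) x :
  cast G ev (phi i x) = phi j (cast F eu x).
Proof. by case: j / e eu ev => eu ev; rewrite !cast_id. Qed.

End Transport.

Lemma int_succ_ind (F : int -> Type) (P : forall k, F k -> Prop) :
  (forall m x, P (m + 1) x) -> forall k x, P k x.
Proof. by move=> P_succ k; rewrite -(subrK 1 k); apply: P_succ. Qed.

Lemma projective_rV0 (R : pzRingType) : projective_mod 'rV[R]_0.
Proof.
move=> X Y p f pL _ fL; exists (fun _ => 0); split; first exact: is_lin_zero.
by move=> z; rewrite [z]thinmx0 !is_lin0.
Qed.

Section IntDependentChoice.
Variables (S : int -> Type) (F : forall k, S k -> S (k + 1) -> Prop) (b : int).
Arguments F {k}.
Variable init : forall k, k <= b -> S k.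
Arguments init {k}.
Hypothesis F_below : forall k (s : S k) (s' : S (k + 1)), k < b -> F s s'.
Variable next : forall k, S k -> S (k + 1).
Arguments next {k}.
Hypothesis F_next : forall k (s : S k), F s (next s).

Fact addr_natS (m : nat) : b + m%:Z + 1 = b + m.+1%:Z.
Proof. by rewrite -addrA -PoszD addn1. Qed.

Fixpoint choice_iter (m : nat) : S (b + m%:Z) :=
  if m is m'.+1 then ecast k (S k) (addr_natS m') (next (choice_iter m'))
  else ecast k (S k) (esym (addr0 b)) (init (lexx b)).

Fact addr_absz_sub k : b <= k -> b + `|k - b|%N%:Z = k.
Proof. by move=> le_bk; rewrite gez0_abs ?subr_ge0 // addrCA subrr addr0. Qed.

Fact le_of_not_ge k : ~ b <= k -> k <= b.
Proof. by move/negP; rewrite -ltNge => /ltW. Qed.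

(* [init] below b; from b upwards, iterate [next] along b + |k - b| = k. *)
Definition choice_seq k : S k :=
  match decP (@idP (b <= k)) with
  | left le_bk => ecast i (S i) (addr_absz_sub le_bk) (choice_iter `|k - b|)
  | right not_le_bk => init (le_of_not_ge not_le_bk)
  end.

Lemma choice_seqE k m (e : b + m%:Z = k) : choice_seq k = ecast i (S i) e (choice_iter m).
Proof.
rewrite /choice_seq; case: decP => [le_bk | not_le_bk]; last first.
  by case: not_le_bk; rewrite -e lerDl.
have em : `|k - b|%N = m by rewrite -e addrAC subrr add0r absz_nat.
by move: (addr_absz_sub le_bk); rewrite em => e'; rewrite (eq_irrelevance e e').
Qed.

Lemma F_ecast_next i k (e : i = k) (e' : i + 1 = k + 1) (s : S i) :
  F (ecast j (S j) e s) (ecast j (S j) e' (next s)).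
Proof. by case: k / e e' => e'; rewrite (eq_irrelevance e' erefl). Qed.

Lemma choice_seq_next k : F (choice_seq k) (choice_seq (k + 1)).
Proof.
have [lt_kb | le_bk] := ltP k b; first exact: F_below.
pose m := `|k - b|%N; have e := addr_absz_sub le_bk.
have e' : b + m.+1%:Z = k + 1 by rewrite -addr_natS e.
rewrite (choice_seqE e) (choice_seqE e') /=.
by move: (addr_natS m) e'; case: _ / => e'; apply: F_ecast_next.
Qed.

End IntDependentChoice.

Lemma int_dependent_choice (S : int -> Type) (F : forall k, S k -> S (k + 1) -> Prop)
    (b : int) (init : forall k, k <= b -> S k) :
  (forall k (s : S k) (s' : S (k + 1)), k < b -> F k s s') ->
  (forall k (s : S k), exists s', F k s s') ->
  exists st : forall k, S k, forall k, F k (st k) (st (k + 1)).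
Proof.
move=> F_below F_step.
have /dfun_choice[next F_next] : forall k, exists next : S k -> S (k + 1),
    forall s, F k s (next s) by move=> k; apply: dfun_choice.
by exists (choice_seq init next) => k; apply: choice_seq_next.
Qed.

Section Disks.
Variables (R : pzRingType) (Q : int -> lmodType R).

(* The direct sum over k of the disks with Q_k in degrees k and k - 1: degree
   j holds the upper copy of Q_j and the lower copy of Q_(j+1). *)
Definition disks_obj j : lmodType R := (Q j * Q (j + 1))%type.

Definition disks_dif n (x : disks_obj (n + 1)) : disks_obj n := (0, x.1).

Fact disks_dif_lin n : is_lin (@disks_dif n).
Proof. by move=> a [x1 x2] [y1 y2]; rewrite /disks_dif /= pairZD scaler0 addr0. Qed.

Fact disks_dif_dif n x : @disks_dif n (disks_dif x) = 0.
Proof. by []. Qed.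

Definition disks : complex R := Complex R disks_obj disks_dif disks_dif_lin disks_dif_dif.

Lemma disks_projective : (forall j, projective_mod (Q j)) -> projective_cx disks.
Proof.
move=> Qproj X Y p phi pC p_onto phiC.
(* A chain map out of a disk is determined by its value on the upper copy. *)
have /dfun_choice[v vP] : forall j, exists v : Q j -> obj X j,
    is_lin v /\ forall z, p j (v z) = phi j (z, 0).
  move=> j; apply: (Qproj j _ _ (p j) (fun z => phi j (z, 0)) (pC.1 j) (p_onto j)).
  by move=> a x y; rewrite -(phiC.1 j) pairZD scaler0 addr0.
have vL j := (vP j).1; have pv j := (vP j).2.
exists (fun j q => v j q.1 + dif X j (v (j + 1) q.2)); split; first split.
- move=> j; exact: is_lin_copair (vL j) (is_lin_comp (dif_lin X j) (vL (j + 1))).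
- move=> n [q1 q2] /=.
  by rewrite (is_linD (dif_lin X n)) dif_dif (is_lin0 (vL n)) add0r addr0.
- move=> n [q1 q2] /=.
  rewrite (is_linD (pC.1 n)) -(pC.2 n) !pv (phiC.2 n) -(is_linD (phiC.1 n)).
  by rewrite /= pairD addr0 add0r.
Qed.

Section DiskMaps.
Variables (M N : complex R).

Definition disks_in (a : forall j, obj M j -> Q j) (b : forall j, obj M j -> Q (j + 1)) :
  forall j, obj M j -> obj disks j := fun j x => (a j x, b j x).

Lemma disks_in_chain a b :
  (forall j, is_lin (a j)) -> (forall j, is_lin (b j)) ->
  (forall n x, a (n + 1) x = b n (dif M n x)) -> is_chain (disks_in a b).
Proof.
move=> aL bL ab; split=> [j | n x]; first exact: is_lin_pair.
have ad_eq0 : forall n (x : obj M (n + 1)), a n (dif M n x) = 0.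
  apply: (int_succ_ind (F := fun n => obj M (n + 1))) => m y.
  by rewrite ab dif_dif is_lin0.
by rewrite /disks_in /= /disks_dif /= ad_eq0 ab.
Qed.

Definition disks_out (c : forall j, Q j -> obj N j)
    (e : forall j, Q (j + 1) -> obj N (j + 1)) : forall j, obj disks j -> obj N j :=
  fun j q => c j q.1 + dif N j (e j q.2).

Lemma disks_out_chain c e :
  (forall j, is_lin (c j)) -> (forall j, is_lin (e j)) ->
  (forall n q, c (n + 1) q = e n q) -> is_chain (disks_out c e).
Proof.
move=> cL eL ce; split=> [j | n [q1 q2]].
  exact: is_lin_copair (cL j) (is_lin_comp (dif_lin N j) (eL j)).
by rewrite /disks_out /= (is_linD (dif_lin N n)) dif_dif addr0 is_lin0 // add0r ce.
Qed.

End DiskMaps.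
End Disks.

Section NullHomotopyFactorization.
Variables (R : pzRingType) (M N : complex R).

Definition is_null_homotopy (f : forall n, obj M n -> obj N n)
    (s : forall k, obj M k -> obj N (k + 1)) :=
  forall k x, f (k + 1) x = dif N (k + 1) (s (k + 1) x) + s k (dif M k x).

Definition factors_through_projective_cx (f : forall n, obj M n -> obj N n) :=
  exists (P : complex R) (g : forall n, obj M n -> obj P n)
         (h : forall n, obj P n -> obj N n),
    [/\ projective_cx P, is_chain g, is_chain h & forall n x, f n x = h n (g n x)].

Variables (P : int -> lmodType R) (g : forall k, obj M k -> P k)
          (h : forall k, P k -> obj N (k + 1)).
Arguments g : clear implicits.
Arguments h : clear implicits.
Hypotheses (gL : forall k, is_lin (g k)) (hL : forall k, is_lin (h k)).

(* Components of M -> disks Q -> N for Q j := P (j - 1), transported along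
   j - 1 + 1 = j and j + 1 - 1 = j. *)
Definition g_prev_dif j (x : obj M j) : P (j - 1) :=
  g (j - 1) (dif M (j - 1) (cast (obj M) (esym (subrK 1 j)) x)).
Definition g_shift j (x : obj M j) : P (j + 1 - 1) := cast P (esym (addrK 1 j)) (g j x).
Definition h_prev j (q : P (j - 1)) : obj N j := cast (obj N) (subrK 1 j) (h (j - 1) q).
Definition h_shift j (q : P (j + 1 - 1)) : obj N (j + 1) := h j (cast P (addrK 1 j) q).
Arguments g_prev_dif : clear implicits.
Arguments g_shift : clear implicits.
Arguments h_prev : clear implicits.
Arguments h_shift : clear implicits.

Lemma g_prev_difE n x : g_prev_dif (n + 1) x = g_shift n (dif M n x).
Proof.
symmetry; apply: (cast_natural (F := obj M) (G := P) (u := fun k => k + 1) (v := id)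
                    (fun k y => g k (dif M k y)) (esym (addrK 1 n))).
Qed.

Lemma h_prevE n q : h_prev (n + 1) q = h_shift n q.
Proof.
exact: (cast_natural (F := P) (G := obj N) (u := id) (v := fun k => k + 1) h (addrK 1 n)).
Qed.

Lemma h_shift_g_shift j x : h_shift j (g_shift j x) = h j (g j x).
Proof. by rewrite /h_shift /g_shift castK. Qed.

Lemma null_homotopy_factors f :
  (forall k, projective_mod (P k)) -> is_null_homotopy f (fun k x => h k (g k x)) ->
  factors_through_projective_cx f.
Proof.
move=> Pproj hom.
exists (disks (fun j => P (j - 1))), (disks_in g_prev_dif g_shift), (disks_out h_prev h_shift).
split; first by apply: disks_projective => j; apply: Pproj.
- apply: disks_in_chain g_prev_difE => j a x y.
    by rewrite /g_prev_dif cast_lin dif_lin gL.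
  by rewrite /g_shift gL cast_lin.
- apply: disks_out_chain h_prevE => j a x y.
    by rewrite /h_prev hL cast_lin.
  by rewrite /h_shift cast_lin hL.
- apply: int_succ_ind => m x.
  rewrite /disks_out /disks_in /= g_prev_difE h_prevE !h_shift_g_shift (hom m x).
  exact: addrC.
Qed.

End NullHomotopyFactorization.

Section NullHomotopyConstruction.
Variables (R : pzRingType) (M N : complex R) (f : forall n, obj M n -> obj N n).
Arguments f : clear implicits.
Hypothesis fC : is_chain f.

Record stage k := Stage {
  stage_mod : lmodType R;
  stage_in : obj M k -> stage_mod;
  stage_out : stage_mod -> obj N (k + 1);
  stage_projective : projective_mod stage_mod;
  stage_in_lin : is_lin stage_in;
  stage_out_lin : is_lin stage_out }.
Arguments stage_out {k} s _.

Definition stage_hom k (st : stage k) (x : obj M k) := stage_out st (stage_in st x).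

Lemma stage_hom_lin k (st : stage k) : is_lin (stage_hom st).
Proof. by move=> a x y; rewrite /stage_hom stage_in_lin stage_out_lin. Qed.

Definition homotopic_on_boundaries k (st : stage k) :=
  forall x : obj M (k + 1), f k (dif M k x) = dif N k (stage_hom st (dif M k x)).

Definition homotopy_step k (st : stage k) (st' : stage (k + 1)) :=
  forall x, f (k + 1) x = dif N (k + 1) (stage_hom st' x) + stage_hom st (dif M k x).

Lemma homotopy_step_on_boundaries k (st : stage k) st' :
  homotopy_step st st' -> homotopic_on_boundaries st'.
Proof. by move=> step x; rewrite step dif_dif (is_lin0 (stage_hom_lin st)) addr0. Qed.

Lemma homotopic_on_boundaries_trivial k (st : stage k) :
  (forall x : obj M k, x = 0) -> homotopic_on_boundaries st.
Proof.
move=> M0 x; rewrite (M0 (dif M k x)) (is_lin0 (fC.1 k)).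
by rewrite (is_lin0 (stage_hom_lin st)) (is_lin0 (dif_lin N k)).
Qed.

Lemma homotopy_step_trivial k (st : stage k) st' :
  (forall x : obj M (k + 1), x = 0) -> homotopy_step st st'.
Proof.
move=> M0 x; rewrite (M0 x) (is_lin0 (fC.1 _)) (is_lin0 (stage_hom_lin st')).
by rewrite (is_lin0 (dif_lin M k)) (is_lin0 (stage_hom_lin st)) (is_lin0 (dif_lin N _)) addr0.
Qed.

Definition zero_stage k : stage k := Stage (@projective_rV0 R) is_lin_zero is_lin_zero.

Hypothesis N_exact : exact_cx N.
Hypothesis cycles_sub : forall n, cycles_subprojective M N n.

Lemma stage_extend k (st : stage k) :
  homotopic_on_boundaries st -> exists st' : stage (k + 1), homotopy_step st st'.
Proof.
move=> st_bd.
pose phi x := f (k + 1) x - stage_hom st (dif M k x).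
have phiL : is_lin phi.
  move=> a x y; rewrite /phi (fC.1 _) (dif_lin M) (stage_hom_lin st) scalerBr.
  by rewrite opprD addrACA.
have dphi x : dif N k (phi x) = 0 by rewrite /phi (is_linB (dif_lin N k)) fC.2 st_bd subrr.
have [P [g [h [Pproj gL hL dh phi_gh]]]] := cycles_sub phiL dphi.
have [l [lL dl]] := projective_lift_exact (dif_lin N k) (dif_lin N (k + 1))
  (dif_dif N k) (@N_exact k) Pproj hL dh.
by exists (Stage Pproj gL lL) => x; rewrite /stage_hom /= dl -phi_gh /phi subrK.
Qed.

Lemma null_homotopy_through_projectives (b : int) :
  (forall n, n <= b -> forall x : obj M n, x = 0) ->
  exists (P : int -> lmodType R) (g : forall k, obj M k -> P k)
         (h : forall k, P k -> obj N (k + 1)),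
    [/\ forall k, projective_mod (P k), forall k, is_lin (g k), forall k, is_lin (h k)
      & is_null_homotopy f (fun k x => h k (g k x))].
Proof.
move=> Mb; pose S k := {st : stage k | homotopic_on_boundaries st}.
pose init k (le_kb : k <= b) : S k :=
  exist _ (zero_stage k) (homotopic_on_boundaries_trivial _ (Mb k le_kb)).
have step_below k (s : S k) (s' : S (k + 1)) : k < b -> homotopy_step (sval s) (sval s').
  by move=> lt_kb; apply: homotopy_step_trivial; apply: (Mb (k + 1)); rewrite lezD1.
have step_ex k (s : S k) : exists s' : S (k + 1), homotopy_step (sval s) (sval s').
  have [s' step] := stage_extend (svalP s).
  by exists (exist _ s' (homotopy_step_on_boundaries step)).
have [st st_step] := int_dependent_choice init step_below step_ex.
exists (fun k => stage_mod (sval (st k))), (fun k => stage_in (sval (st k))).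
exists (fun k => stage_out (sval (st k))).
split=> [k | k | k | k x]; [exact: stage_projective | exact: stage_in_lin
  | exact: stage_out_lin | exact: st_step].
Qed.

End NullHomotopyConstruction.

Theorem theorem2p6 (R : pzRingType) (N M : complex R) :
  exact_cx N -> bounded_below M ->
  (forall n : int, cycles_subprojective M N n) ->
  subprojective_cx M N.
Proof.
move=> N_exact [b Mb] cycles_sub f fC.
have [P [g [h [Pproj gL hL hom]]]] :=
  null_homotopy_through_projectives fC N_exact cycles_sub Mb.
exact (null_homotopy_factors gL hL Pproj hom).
Qed.
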